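(* Let $r\ge0$ be an integer, let $a,b,c,z,A_1,\dots,A_{r+1},B_1,\dots,B_r$ and $q$ be complex numbers with $|q|<1$ and $|cz|<1$ (generic, so that all denominators are nonzero and all series converge). Then $$\frac{(azq;q)_\infty}{(bz;q)_\infty}\,{}_{r+1}\phi_r\Big[\genfrac{}{}{0pt}{}{A_1,\ldots,A_{r+1}}{B_1,\ldots,B_{r}};q,cz\Big] =\lim_{x,y\to\infty}\sum_{n=0}^{\infty}\frac{(az,(az)^{1/2}q,-(az)^{1/2}q,aq/b,x,y;q)_n}{(q,(az)^{1/2},-(az)^{1/2},bz,azq/x,azq/y;q)_n}\Big(\frac{bz}{xy}\Big)^n \,{}_{r+3}\phi_{r+2}\Big[\genfrac{}{}{0pt}{}{azq^n,azq^{2n+1},A_1,\ldots,A_{r+1}}{bzq^n,azq^{2n},B_1,\ldots,B_{r}};q,czq^n\Big].$$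
   Context: $(x;q)_\infty=\prod_{j\ge0}(1-xq^j)$, $(x;q)_n=\prod_{j=0}^{n-1}(1-xq^j)$, and $(x_1,\dots,x_m;q)_n=\prod_{i=1}^m(x_i;q)_n$. The basic hypergeometric series is ${}_{s+1}\phi_s\big[\genfrac{}{}{0pt}{}{a_1,\ldots,a_{s+1}}{b_1,\ldots,b_{s}};q,w\big]=\sum_{n\ge0}\frac{(a_1,\ldots,a_{s+1};q)_n}{(q,b_1,\ldots,b_s;q)_n}w^n$. *)

From Stdlib Require Import Reals List.
From Coquelicot Require Import Coquelicot.
Open Scope C_scope.

(* limit of a C-valued sequence (total; meaningful when it converges) *)
Definition Climseq (u : nat -> C) : C := @lim C_CompleteNormedModule (filtermap u eventually).

Definition CSeries (a : nat -> C) : C := Climseq (fun N => sum_n a N).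

Fixpoint qpoch (x q : C) (n : nat) : C :=
  match n with
  | O => RtoC 1
  | S m => qpoch x q m * (RtoC 1 - x * pow_n q m)
  end.

Definition qpinf (x q : C) : C := Climseq (qpoch x q).

Definition qpochs (xs : list C) (q : C) (n : nat) : C :=
  fold_right (fun x acc => qpoch x q n * acc) (RtoC 1) xs.

Definition phi (as_ bs : list C) (q w : C) : C :=
  CSeries (fun n => qpochs as_ q n / (qpoch q q n * qpochs bs q n) * pow_n w n).

Definition fam (f : nat -> C) (m : nat) : list C := map f (seq 0 m).

(* the filter "x -> oo and y -> oo" on C * C (|x|, |y| -> +oo jointly) *)
Definition infty2 (P : C * C -> Prop) : Prop :=
  exists M : R, forall x y : C, M < Cmod x -> M < Cmod y -> P (x, y).

(* As [x, y -> oo], the coefficient [(x, y; q)_n (b z / (x y))^n / (a z q / x, a z q / y; q)_n]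
   tends to [q^(n (n - 1)) (b z)^n], and for large [|x|, |y|] the whole coefficient [xy_coef] is
   bounded by [C 4^(-n)]; by Tannery's theorem the right-hand side therefore tends to
   [sum_n gweight n * ocoef n * Phi n].  Expanding [Phi n = sum_k acoef k * ycoef n k] and
   interchanging the two sums (Tannery again) reduces the claim to
   [sum_n zterm n k = (a z q; q)_oo / (b z; q)_oo] for every [k], where
   [zterm n k = gweight n * ocoef n * ycoef n k].  Since [zterm n k - zterm n (k + 1)] telescopes in
   [n] to [wterm (n + 1) k - wterm n k], with [wterm 0 k = 0] and [wterm n k -> 0], this sum does not
   depend on [k]; as [k -> oo] only its [n = 0] term [(a z q; q)_k / (b z; q)_k] survives. *)

From Stdlib Require Import Reals List Lia Lra FunctionalExtensionality.
From Coquelicot Require Import Coquelicot.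
Open Scope C_scope.

(** * Limits and series in C *)

Lemma pow_n_Cpow (x : C) n : pow_n x n = x ^ n.
Proof. induction n as [|n IH]; simpl; [reflexivity|now rewrite IH]. Qed.

Lemma filterlim_locally_Cmod {T} (F : (T -> Prop) -> Prop) {FF : Filter F} (f : T -> C) (l : C) :
  filterlim f F (locally l) <->
  forall eps : R, (0 < eps)%R -> F (fun x => (Cmod (f x - l) < eps)%R).
Proof.
  split.
  - intros H eps He.
    assert (Hs : (0 < sqrt 2)%R) by (apply sqrt_lt_R0; lra).
    apply (H (fun y => (Cmod (y - l) < eps)%R)).
    exists (mkposreal (eps / sqrt 2) ltac:(apply Rdiv_lt_0_compat; auto)).
    intros y Hy. apply C_NormedModule_mixin_compat2 in Hy. simpl in Hy.
    replace eps with (sqrt 2 * (eps / sqrt 2))%R by (field; lra). exact Hy.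
  - intros H P [eps Heps]. unfold filtermap.
    apply (filter_imp (F := F) (fun x => (Cmod (f x - l) < eps)%R)); [|apply H, cond_pos].
    intros x Hx. apply Heps, C_NormedModule_mixin_compat1, Hx.
Qed.

Lemma filterlim_Cmod_sub {T} (F : (T -> Prop) -> Prop) {FF : Filter F} (f : T -> C) (l c : C) :
  filterlim f F (locally l) -> filterlim (fun x => Cmod (f x - c)) F (locally (Cmod (l - c))).
Proof.
  intros H.
  apply (filterlim_comp _ _ _ (fun x => f x - c) Cmod _ (locally (l - c))).
  - apply filterlim_locally_Cmod; [exact FF|]. intros eps He.
    apply (filter_imp (F := F) (fun x => (Cmod (f x - l) < eps)%R));
      [|now apply filterlim_locally_Cmod].
    intros x Hx. now replace (f x - c - (l - c)) with (f x - l) by ring.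
  - exact (filterlim_norm (V := C_NormedModule) (l - c)).
Qed.

Lemma Cmod_sub_le_of_filterlim {T} (F : (T -> Prop) -> Prop) {FF : ProperFilter F}
  (f : T -> C) (l c : C) (e : R) :
  filterlim f F (locally l) -> F (fun x => (Cmod (f x - c) <= e)%R) -> (Cmod (l - c) <= e)%R.
Proof.
  intros Hl He.
  exact (filterlim_le (F := F) _ (fun _ => e) (Cmod (l - c)) e He
           (filterlim_Cmod_sub F f l c Hl) (filterlim_const e)).
Qed.

Lemma Cmod_ge_of_filterlim {T} (F : (T -> Prop) -> Prop) {FF : ProperFilter F}
  (f : T -> C) (l : C) (m : R) :
  filterlim f F (locally l) -> F (fun x => (m <= Cmod (f x))%R) -> (m <= Cmod l)%R.
Proof.
  intros Hl Hm.
  assert (H := filterlim_Cmod_sub F f l 0 Hl).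
  replace (l - 0) with l in H by ring.
  apply (filterlim_ext (fun x => Cmod (f x - 0)) (fun x => Cmod (f x))) in H;
    [|intros x; now replace (f x - 0) with (f x) by ring].
  exact (filterlim_le (F := F) (fun _ => m) _ m (Cmod l) Hm (filterlim_const m) H).
Qed.

Lemma filterlim_Cplus {T} (F : (T -> Prop) -> Prop) {FF : Filter F} (f g : T -> C) (a b : C) :
  filterlim f F (locally a) -> filterlim g F (locally b) ->
  filterlim (fun p => f p + g p) F (locally (a + b)).
Proof.
  intros Hf Hg. exact (filterlim_comp_2 f g Cplus Hf Hg (filterlim_plus (V := C_NormedModule) a b)).
Qed.

Lemma filterlim_Cmult {T} (F : (T -> Prop) -> Prop) {FF : Filter F} (f g : T -> C) (a b : C) :
  filterlim f F (locally a) -> filterlim g F (locally b) ->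
  filterlim (fun p => f p * g p) F (locally (a * b)).
Proof.
  intros Hf Hg. apply filterlim_locally_Cmod; [exact FF|]. intros eps He.
  assert (Ha := Cmod_ge_0 a). assert (Hb := Cmod_ge_0 b).
  set (e := Rmin 1 (eps / (2 * (Cmod a + Cmod b + 1)))).
  assert (He1 : (e <= 1)%R) by apply Rmin_l.
  assert (He2 : (e * (Cmod a + Cmod b + 1) <= eps / 2)%R).
  { apply Rle_trans with (eps / (2 * (Cmod a + Cmod b + 1)) * (Cmod a + Cmod b + 1))%R.
    - apply Rmult_le_compat_r; [lra|apply Rmin_r].
    - right. field. lra. }
  assert (He0 : (0 < e)%R) by (apply Rmin_glb_lt; [lra|apply Rdiv_lt_0_compat; lra]).
  apply (filter_imp (fun p => (Cmod (f p - a) < e)%R /\ (Cmod (g p - b) < e)%R));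
    [|apply filter_and; now apply filterlim_locally_Cmod].
  intros p [H1 H2].
  replace (f p * g p - a * b) with ((f p - a) * (g p - b) + (f p - a) * b + a * (g p - b)) by ring.
  eapply Rle_lt_trans; [apply Cmod_triangle|].
  eapply Rle_lt_trans; [apply Rplus_le_compat_r, Cmod_triangle|].
  rewrite !Cmod_mult.
  assert (H3 := Cmod_ge_0 (f p - a)). assert (H4 := Cmod_ge_0 (g p - b)).
  assert (Cmod (f p - a) * Cmod (g p - b) <= e * 1)%R by (apply Rmult_le_compat; lra).
  assert (Cmod (f p - a) * Cmod b <= e * Cmod b)%R by (apply Rmult_le_compat_r; lra).
  assert (Cmod a * Cmod (g p - b) <= Cmod a * e)%R by (apply Rmult_le_compat_l; lra).
  nra.
Qed.

Lemma filterlim_Cinv {T} (F : (T -> Prop) -> Prop) {FF : Filter F} (g : T -> C) (b : C) :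
  b <> 0 -> filterlim g F (locally b) -> filterlim (fun p => / g p) F (locally (/ b)).
Proof.
  intros Hb Hg. apply filterlim_locally_Cmod; [exact FF|]. intros eps He.
  assert (Hb' := proj1 (Cmod_gt_0 b) Hb).
  set (e := Rmin (Cmod b / 2) (eps * (Cmod b * Cmod b) / 2)).
  assert (He0 : (0 < e)%R).
  { apply Rmin_glb_lt; [lra|]. apply Rdiv_lt_0_compat; [|lra]. apply Rmult_lt_0_compat; nra. }
  apply (filter_imp (fun p => (Cmod (g p - b) < e)%R)); [|now apply filterlim_locally_Cmod].
  intros p Hp.
  assert (He1 : (e <= Cmod b / 2)%R) by apply Rmin_l.
  assert (He2 : (e <= eps * (Cmod b * Cmod b) / 2)%R) by apply Rmin_r.
  assert (Hgp : (Cmod b / 2 < Cmod (g p))%R).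
  { assert (H := Cmod_triangle (g p) (- (g p - b))). replace (g p + - (g p - b)) with b in H by ring.
    rewrite Cmod_opp in H. lra. }
  assert (Hg0 : g p <> 0) by (intros E; rewrite E, Cmod_0 in Hgp; lra).
  replace (/ g p - / b) with (- (g p - b) / (g p * b)) by (field; auto).
  rewrite Cmod_div, Cmod_opp, Cmod_mult by (now apply Cmult_neq_0).
  apply Rmult_lt_reg_r with (Cmod (g p) * Cmod b)%R; [nra|].
  unfold Rdiv. rewrite Rmult_assoc, Rinv_l, Rmult_1_r by nra.
  apply Rlt_le_trans with e; [exact Hp|]. nra.
Qed.

Lemma filterlim_sum_n {T} (F : (T -> Prop) -> Prop) {FF : Filter F} (f : T -> nat -> C) (g : nat -> C) :
  (forall n, filterlim (fun p => f p n) F (locally (g n))) ->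
  forall N, filterlim (fun p => sum_n (f p) N) F (locally (sum_n g N)).
Proof.
  intros H N. induction N as [|N IH].
  - rewrite sum_O. apply (filterlim_ext (fun p => f p 0%nat)); [intros p; now rewrite sum_O|apply H].
  - rewrite sum_Sn.
    apply (filterlim_ext (fun p => sum_n (f p) N + f p (S N))); [intros p; now rewrite sum_Sn|].
    now apply filterlim_Cplus.
Qed.

Lemma Climseq_unique (u : nat -> C) (l : C) :
  filterlim u eventually (locally l) -> Climseq u = l.
Proof.
  intros H. unfold Climseq.
  apply (filterlim_locally_unique (F := eventually) u); [|exact H].
  intros P [eps Heps].
  refine (filter_imp _ _ _ (complete_cauchy (T := C_CompleteNormedModule)
                              (filtermap u eventually) _ _ eps)).
  - intros x Hx. apply Heps, Hx.
  - intros e. exists l. apply H, locally_ball.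
Qed.

Lemma CSeries_unique (a : nat -> C) (l : C) : is_series a l -> CSeries a = l.
Proof. apply Climseq_unique. Qed.

Lemma CSeries_correct (a : nat -> C) : ex_series a -> is_series a (CSeries a).
Proof. intros [l Hl]. now rewrite (CSeries_unique _ _ Hl). Qed.

Lemma is_series_tail (u : nat -> C) (l : C) : is_series u l -> is_series (fun n => u (S n)) (l - u 0%nat).
Proof.
  intros H. apply (is_series_incr_1 (V := C_NormedModule)).
  match goal with |- is_series _ ?m => replace m with l; [exact H|] end.
  change (l = l - u 0%nat + u 0%nat). ring.
Qed.

Lemma is_series_sum_n_scal (f : nat -> nat -> C) (c s : nat -> C) K :
  (forall k, is_series (fun n => f n k) (s k)) ->
  is_series (fun n => sum_n (fun k => c k * f n k) K) (sum_n (fun k => c k * s k) K).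
Proof.
  intros H. induction K as [|K IH].
  - apply (is_series_ext (fun n => scal (c 0%nat) (f n 0%nat))); [intros n; now rewrite sum_O|].
    rewrite sum_O. apply (is_series_scal_l (V := C_NormedModule)), H.
  - apply (is_series_ext (fun n => plus (sum_n (fun k => c k * f n k) K) (scal (c (S K)) (f n (S K)))));
      [intros n; now rewrite sum_Sn|].
    rewrite sum_Sn. apply (is_series_plus (V := C_NormedModule)); [exact IH|].
    apply (is_series_scal_l (V := C_NormedModule)), H.
Qed.

Lemma is_series_geom_scal (c r : R) :
  (0 <= r < 1)%R -> is_series (fun n => c * r ^ n)%R (c / (1 - r))%R.
Proof.
  intros Hr.
  apply (is_series_scal_l (K := R_AbsRing) (V := R_NormedModule) c),
        is_series_geom; rewrite Rabs_pos_eq; lra.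
Qed.

Lemma geom_eventually_lt (K r : R) :
  (0 <= r < 1)%R -> forall eps, (0 < eps)%R -> eventually (fun n => (K * r ^ n < eps)%R).
Proof.
  intros Hr eps He. destruct (Rle_or_lt K 0) as [HK|HK].
  - exists 0%nat. intros n _. assert (0 <= r ^ n)%R by (apply pow_le; lra). nra.
  - destruct (pow_lt_1_zero r ltac:(rewrite Rabs_pos_eq; lra) (eps / K)
                ltac:(apply Rdiv_lt_0_compat; lra)) as [N HN].
    exists N. intros n Hn. specialize (HN n Hn). rewrite Rabs_pos_eq in HN by (apply pow_le; lra).
    apply Rmult_lt_reg_r with (/ K)%R; [apply Rinv_0_lt_compat; lra|].
    now replace (K * r ^ n * / K)%R with (r ^ n)%R by (field; lra).
Qed.

Lemma filterlim_geom_bound_0 (u : nat -> C) (K r : R) :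
  (0 <= r < 1)%R -> (forall n, Cmod (u n) <= K * r ^ n)%R -> filterlim u eventually (locally (RtoC 0)).
Proof.
  intros Hr Hu. apply filterlim_locally_Cmod; [apply eventually_filter|]. intros eps He.
  destruct (geom_eventually_lt K r Hr eps He) as [N HN]. exists N. intros n Hn.
  replace (u n - 0) with (u n) by ring. eapply Rle_lt_trans; [apply Hu|now apply HN].
Qed.

Lemma sum_n_le_series (M : nat -> R) (SM : R) N :
  (forall k, 0 <= M k)%R -> is_series M SM -> (sum_n M N <= SM)%R.
Proof.
  intros HM HS. apply (is_lim_seq_incr_compare (sum_n M) SM HS).
  intros n. rewrite sum_Sn. specialize (HM (S n)). unfold plus; simpl. lra.
Qed.

Lemma series_tail_le (a : nat -> C) (M : nat -> R) (SM : R) :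
  (forall n, Cmod (a n) <= M n)%R -> is_series M SM ->
  ex_series a /\ forall N, (Cmod (CSeries a - sum_n a N) <= SM - sum_n M N)%R.
Proof.
  intros Ha HS.
  assert (HM : forall k, (0 <= M k)%R) by (intros k; eapply Rle_trans; [apply Cmod_ge_0|apply Ha]).
  assert (Hex : ex_series a) by (apply (ex_series_le (V := C_CompleteNormedModule) a M Ha); now exists SM).
  split; [exact Hex|]. intros N.
  apply (Cmod_sub_le_of_filterlim eventually (sum_n a)); [exact (CSeries_correct a Hex)|].
  exists N. intros m Hm.
  assert (E : sum_n_m a (S N) m = sum_n a m - sum_n a N) by exact (sum_n_m_sum_n a N m Hm).
  rewrite <- E.
  apply Rle_trans with (sum_n_m M (S N) m);
    [eapply Rle_trans; [apply (norm_sum_n_m (V := C_NormedModule))|apply sum_n_m_le, Ha]|].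
  assert (E' : sum_n_m M (S N) m = (sum_n M m - sum_n M N)%R) by exact (sum_n_m_sum_n M N m Hm).
  rewrite E'. assert (H := sum_n_le_series M SM m HM HS). lra.
Qed.

Lemma CSeries_Cmod_le (a : nat -> C) (M : nat -> R) (SM : R) :
  (forall n, Cmod (a n) <= M n)%R -> is_series M SM ->
  ex_series a /\ (Cmod (CSeries a) <= SM)%R.
Proof.
  intros Ha HS. destruct (series_tail_le a M SM Ha HS) as [Hex H].
  split; [exact Hex|]. specialize (H 0%nat). specialize (Ha 0%nat). rewrite !sum_O in H.
  replace (CSeries a) with ((CSeries a - a 0%nat) + a 0%nat) by ring.
  eapply Rle_trans; [apply Cmod_triangle|lra].
Qed.

Lemma tannery {T} (F : (T -> Prop) -> Prop) {FF : ProperFilter F}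
  (f : T -> nat -> C) (g : nat -> C) (M : nat -> R) (SM : R) :
  is_series M SM ->
  F (fun p => forall n, (Cmod (f p n) <= M n)%R) ->
  (forall n, filterlim (fun p => f p n) F (locally (g n))) ->
  F (fun p => ex_series (f p)) /\ ex_series g /\
  filterlim (fun p => CSeries (f p)) F (locally (CSeries g)).
Proof.
  intros HS HB HL.
  assert (Hg : forall n, (Cmod (g n) <= M n)%R).
  { intros n. replace (g n) with (g n - 0) by ring.
    apply (Cmod_sub_le_of_filterlim F (fun p => f p n)); [apply HL|].
    refine (filter_imp _ _ _ HB). intros p Hp.
    now replace (f p n - 0) with (f p n) by ring. }
  split; [exact (filter_imp _ _ (fun p Hp => proj1 (series_tail_le (f p) M SM Hp HS)) HB)|].
  split; [exact (proj1 (series_tail_le g M SM Hg HS))|].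
  apply filterlim_locally_Cmod; [apply FF|]. intros eps He.
  assert (He3 : (0 < eps / 3)%R) by lra.
  destruct (proj1 (filterlim_locally (sum_n M) SM) HS (mkposreal _ He3)) as [N HN].
  assert (HMN : (SM - sum_n M N < eps / 3)%R).
  { specialize (HN N (le_n N)). change (Rabs (sum_n M N - SM) < eps / 3)%R in HN.
    apply Rabs_lt_between in HN. lra. }
  assert (HgN := proj2 (series_tail_le g M SM Hg HS) N).
  assert (Hpart : F (fun p => (Cmod (sum_n (f p) N - sum_n g N) < eps / 3)%R)).
  { apply (filterlim_locally_Cmod F (fun p => sum_n (f p) N)); [|exact He3].
    exact (filterlim_sum_n F f g HL N). }
  refine (filter_imp _ _ _ (filter_and _ _ HB Hpart)).
  intros p [Hp HpN].
  assert (HfN := proj2 (series_tail_le (f p) M SM Hp HS) N).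
  replace (CSeries (f p) - CSeries g) with
    ((CSeries (f p) - sum_n (f p) N) + (sum_n (f p) N - sum_n g N) - (CSeries g - sum_n g N)) by ring.
  eapply Rle_lt_trans; [apply Cmod_triangle|]. rewrite Cmod_opp.
  eapply Rle_lt_trans; [apply Rplus_le_compat_r, Cmod_triangle|]. lra.
Qed.

Lemma pow_le_one (x : R) n : (0 <= x <= 1)%R -> (x ^ n <= 1)%R.
Proof. intros Hx. rewrite <- (pow1 n). now apply pow_incr. Qed.

Lemma pow_pow_le_one (x : R) n k : (0 <= x <= 1)%R -> ((x ^ n) ^ k <= 1)%R.
Proof. intros Hx. apply pow_le_one. split; [apply pow_le; lra|now apply pow_le_one]. Qed.

Lemma exp_le_mono (u v : R) : (u <= v)%R -> (exp u <= exp v)%R.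
Proof. intros [H|H]; [left; now apply exp_increasing|right; now subst]. Qed.

Lemma Cmod_mult_le (x y : C) (X Y : R) : (Cmod x <= X)%R -> (Cmod y <= Y)%R -> (Cmod (x * y) <= X * Y)%R.
Proof. intros H1 H2. rewrite Cmod_mult. apply Rmult_le_compat; auto using Cmod_ge_0. Qed.

Lemma Cmod_div_le (x y : C) (X m : R) : (Cmod x <= X)%R -> (0 < m)%R -> (m <= Cmod y)%R ->
  (Cmod (x / y) <= X / m)%R.
Proof.
  intros H1 H2 H3. assert (Hy : y <> 0) by (intros E; rewrite E, Cmod_0 in H3; lra).
  rewrite Cmod_div by exact Hy. unfold Rdiv.
  apply Rmult_le_compat; auto using Cmod_ge_0.
  - left; apply Rinv_0_lt_compat; lra.
  - apply Rinv_le_contravar; lra.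
Qed.

Lemma Cmod_one_minus_le (y : C) : (Cmod (1 - y) <= 1 + Cmod y)%R.
Proof. eapply Rle_trans; [apply Cmod_triangle|]. rewrite Cmod_opp, Cmod_1. lra. Qed.

Lemma Cmod_one_minus_ge (y : C) : (1 - Cmod y <= Cmod (1 - y))%R.
Proof.
  assert (H := Cmod_triangle (1 - y) y). replace (1 - y + y) with (RtoC 1) in H by ring.
  rewrite Cmod_1 in H. lra.
Qed.

Lemma Cmod_mul_pow_le (x q : C) n : (Cmod q <= 1)%R -> (Cmod (x * q ^ n) <= Cmod x)%R.
Proof.
  intros Hq. rewrite Cmod_mult, Cmod_pow.
  assert (Cmod q ^ n <= 1)%R by (apply pow_le_one; split; [apply Cmod_ge_0|exact Hq]).
  assert (Hx := Cmod_ge_0 x). nra.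
Qed.

Lemma Cmod_one_minus_mul_pow_le (x q : C) m : (Cmod q <= 1)%R -> (Cmod (1 - x * q ^ m) <= 1 + Cmod x)%R.
Proof.
  intros Hq. eapply Rle_trans; [apply Cmod_one_minus_le|].
  apply Rplus_le_compat_l, Cmod_mul_pow_le, Hq.
Qed.

Lemma one_minus_neq0 (x : C) : x <> 1 -> 1 - x <> 0.
Proof. intros H E. apply H. replace x with (1 - (1 - x)) by ring. rewrite E. ring. Qed.

(** * q-shifted factorials *)

Lemma qpoch_S x q n : qpoch x q (S n) = qpoch x q n * (1 - x * q ^ n).
Proof. simpl. now rewrite pow_n_Cpow. Qed.

Lemma qpoch_add x q n k : qpoch x q (n + k) = qpoch x q n * qpoch (x * q ^ n) q k.
Proof.
  induction k as [|k IH].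
  - rewrite Nat.add_0_r. simpl. ring.
  - rewrite Nat.add_succ_r, !qpoch_S, IH, Cpow_add_r. ring.
Qed.

Lemma qpoch_0_l q n : qpoch 0 q n = 1.
Proof. induction n as [|n IH]; [reflexivity|]. rewrite qpoch_S, IH. ring. Qed.

Lemma qpoch_mul_q x q k : qpoch (x * q) q k * (1 - x) = qpoch x q k * (1 - x * q ^ k).
Proof.
  induction k as [|k IH]; [simpl; ring|].
  rewrite !qpoch_S, Cpow_S, <- IH. ring.
Qed.

Lemma qpoch_pm_sqrt (w A q : C) n : w * w = A ->
  qpoch (w * q) q n * qpoch (- w * q) q n * (1 - A) =
  qpoch w q n * qpoch (- w) q n * (1 - A * (q ^ n * q ^ n)).
Proof.
  intros HA. subst A. induction n as [|n IH]; [simpl; ring|].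
  rewrite !qpoch_S.
  transitivity (qpoch (w * q) q n * qpoch (- w * q) q n * (1 - w * w)
                * ((1 - w * q * q ^ n) * (1 - - w * q * q ^ n))); [ring|].
  rewrite IH. simpl. ring.
Qed.

Lemma qpoch_neq0 x q n : (forall j, x * q ^ j <> 1) -> qpoch x q n <> 0.
Proof.
  intros H. induction n as [|n IH].
  - simpl. intros E. injection E. lra.
  - rewrite qpoch_S. apply Cmult_neq_0; [exact IH|].
    intros E. apply (H n). replace (x * q ^ n) with (1 - (1 - x * q ^ n)) by ring. rewrite E. ring.
Qed.

Lemma qpoch_shift_neq0 x q n k : (forall j, x * q ^ j <> 1) -> qpoch (x * q ^ n) q k <> 0.
Proof. intros H. apply qpoch_neq0. intros j. rewrite <- Cmult_assoc, <- Cpow_add_r. apply H. Qed.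

Lemma qpoch_q_neq1 q j : (Cmod q < 1)%R -> q * q ^ j <> 1.
Proof.
  intros Hq E. assert (H := Cmod_mul_pow_le q q j ltac:(lra)).
  rewrite E, Cmod_1 in H. lra.
Qed.

Lemma sqrt_mul_pow_neq1 (s A q : C) j : s * s = A -> (forall k, A * q ^ k <> 1) -> s * q ^ j <> 1.
Proof.
  intros Hs HA E. apply (HA (j + j)%nat). rewrite Cpow_add_r, <- Hs.
  transitivity ((s * q ^ j) * (s * q ^ j)); [ring|]. rewrite E. ring.
Qed.

Lemma Cmod_qpoch_le x q n (X : R) : (Cmod q < 1)%R -> (Cmod x <= X)%R ->
  (Cmod (qpoch x q n) <= exp (X / (1 - Cmod q)))%R.
Proof.
  intros Hq HX. assert (Hq0 := Cmod_ge_0 q). assert (Hx := Cmod_ge_0 x).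
  assert (Hexp : forall m, (Cmod (qpoch x q m) <= exp (Cmod x * (1 - Cmod q ^ m) / (1 - Cmod q)))%R).
  { intros m. induction m as [|m IH].
    - simpl. rewrite Cmod_1. replace (Cmod x * (1 - 1) / (1 - Cmod q))%R with 0%R by (field; lra).
      rewrite exp_0. lra.
    - rewrite qpoch_S, Cmod_mult.
      replace (Cmod x * (1 - Cmod q ^ S m) / (1 - Cmod q))%R
        with (Cmod x * (1 - Cmod q ^ m) / (1 - Cmod q) + Cmod x * Cmod q ^ m)%R by (simpl; field; lra).
      rewrite exp_plus. apply Rmult_le_compat; try apply Cmod_ge_0; [exact IH|].
      eapply Rle_trans; [apply Cmod_one_minus_le|].
      rewrite Cmod_mult, Cmod_pow. apply exp_ineq1_le. }
  eapply Rle_trans; [apply Hexp|]. apply exp_le_mono.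
  assert (0 <= Cmod q ^ n)%R by (apply pow_le, Hq0).
  unfold Rdiv. apply Rmult_le_compat_r; [left; apply Rinv_0_lt_compat; lra|nra].
Qed.

Lemma Cmod_qpoch_ge x q n : (Cmod q < 1)%R ->
  (1 - Cmod x * (1 - Cmod q ^ n) / (1 - Cmod q) <= Cmod (qpoch x q n))%R.
Proof.
  intros Hq. assert (Hq0 := Cmod_ge_0 q). assert (Hx := Cmod_ge_0 x).
  induction n as [|n IH].
  - simpl. rewrite Cmod_1. replace (Cmod x * (1 - 1) / (1 - Cmod q))%R with 0%R by (field; lra). lra.
  - rewrite qpoch_S, Cmod_mult.
    assert (Hp0 : (0 <= Cmod q ^ n)%R) by (apply pow_le; auto).
    assert (Hp1 : (Cmod q ^ n <= 1)%R) by (apply pow_le_one; lra).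
    replace (Cmod x * (1 - Cmod q ^ S n) / (1 - Cmod q))%R
      with (Cmod x * (1 - Cmod q ^ n) / (1 - Cmod q) + Cmod x * Cmod q ^ n)%R by (simpl; field; lra).
    set (s := (Cmod x * (1 - Cmod q ^ n) / (1 - Cmod q))%R) in *.
    assert (Hs : (0 <= s)%R) by (apply Rdiv_le_0_compat; [apply Rmult_le_pos|]; lra).
    assert (H1 := Cmod_one_minus_ge (x * q ^ n)). rewrite Cmod_mult, Cmod_pow in H1.
    assert (H0 := Cmod_ge_0 (qpoch x q n)). assert (H2 := Cmod_ge_0 (1 - x * q ^ n)).
    assert (Hc : (0 <= Cmod x * Cmod q ^ n)%R) by nra.
    destruct (Rle_or_lt (1 - (s + Cmod x * Cmod q ^ n)) 0) as [Hneg|Hpos]; [nra|].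
    apply Rle_trans with ((1 - s) * (1 - Cmod x * Cmod q ^ n))%R; [nra|].
    apply Rmult_le_compat; lra.
Qed.

Lemma Cmod_qpoch_ge_half x q n : (Cmod q < 1)%R -> (Cmod x <= (1 - Cmod q) / 2)%R ->
  (1 / 2 <= Cmod (qpoch x q n))%R.
Proof.
  intros Hq Hx. eapply Rle_trans; [|now apply Cmod_qpoch_ge].
  assert (Hq0 := Cmod_ge_0 q). assert (H0 := Cmod_ge_0 x).
  assert (Hp0 : (0 <= Cmod q ^ n)%R) by (apply pow_le; auto).
  assert (Hp1 : (Cmod q ^ n <= 1)%R) by (apply pow_le_one; lra).
  assert (Cmod x * (1 - Cmod q ^ n) <= (1 - Cmod q) / 2)%R by nra.
  enough (Cmod x * (1 - Cmod q ^ n) / (1 - Cmod q) <= 1 / 2)%R by lra.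
  apply Rle_trans with ((1 - Cmod q) / 2 / (1 - Cmod q))%R; [|right; field; lra].
  unfold Rdiv at 1 3. apply Rmult_le_compat_r; [left; apply Rinv_0_lt_compat|]; lra.
Qed.

Lemma qpoch_bounded_below x q : (Cmod q < 1)%R -> (forall j, x * q ^ j <> 1) ->
  exists m, (0 < m)%R /\ forall n, (m <= Cmod (qpoch x q n))%R.
Proof.
  intros Hq Hx. assert (Hq0 := Cmod_ge_0 q).
  (* Beyond [J] the factor [(x q^J; q)_(n - J)] stays above [1/2]; below [J], [(x; q)_J] is
     [(x; q)_n] times a factor bounded by [P]. *)
  destruct (geom_eventually_lt (Cmod x) (Cmod q) ltac:(lra) ((1 - Cmod q) / 2)
              ltac:(lra)) as [J HJ].
  assert (HxJ : (Cmod (x * q ^ J) <= (1 - Cmod q) / 2)%R)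
    by (rewrite Cmod_mult, Cmod_pow; left; apply HJ; lia).
  set (P := exp (Cmod x / (1 - Cmod q))).
  assert (HP : (1 <= P)%R).
  { rewrite <- exp_0. apply exp_le_mono, Rdiv_le_0_compat; [apply Cmod_ge_0|lra]. }
  assert (HJ0 := proj1 (Cmod_gt_0 _) (qpoch_neq0 x q J Hx)).
  exists (Cmod (qpoch x q J) / (2 * P))%R. split; [apply Rdiv_lt_0_compat; lra|].
  intros n. destruct (Compare_dec.le_lt_dec J n) as [HnJ|HnJ].
  - replace n with (J + (n - J))%nat by lia. rewrite qpoch_add, Cmod_mult.
    assert (H := Cmod_qpoch_ge_half _ q (n - J) Hq HxJ).
    apply Rle_trans with (Cmod (qpoch x q J) / 2)%R; [|nra].
    apply Rmult_le_compat_l; [lra|]. apply Rinv_le_contravar; lra.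
  - assert (HJn : Cmod (qpoch x q J) = (Cmod (qpoch x q n) * Cmod (qpoch (x * q ^ n) q (J - n)))%R).
    { rewrite <- Cmod_mult, <- qpoch_add. f_equal. f_equal. lia. }
    assert (H := Cmod_qpoch_le (x * q ^ n) q (J - n) (Cmod x) Hq (Cmod_mul_pow_le x q n ltac:(lra))).
    fold P in H. assert (Hn0 := Cmod_ge_0 (qpoch x q n)).
    apply Rmult_le_reg_r with (2 * P)%R; [lra|].
    unfold Rdiv. rewrite Rmult_assoc, Rinv_l, Rmult_1_r by lra. nra.
Qed.

Lemma qpoch_shift_bounded_below x q : (Cmod q < 1)%R -> (forall j, x * q ^ j <> 1) ->
  exists m, (0 < m)%R /\ forall n k, (m <= Cmod (qpoch (x * q ^ n) q k))%R.
Proof.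
  intros Hq Hx. destruct (qpoch_bounded_below x q Hq Hx) as [m [Hm Hmn]].
  set (P := exp (Cmod x / (1 - Cmod q))).
  assert (HP : (0 < P)%R) by apply exp_pos.
  exists (m / P)%R. split; [now apply Rdiv_lt_0_compat|]. intros n k.
  assert (H := Hmn (n + k)%nat). rewrite qpoch_add, Cmod_mult in H.
  assert (Hn := Cmod_qpoch_le x q n (Cmod x) Hq (Rle_refl _)). fold P in Hn.
  assert (H0 := Cmod_ge_0 (qpoch (x * q ^ n) q k)).
  apply Rmult_le_reg_l with P; [exact HP|].
  replace (P * (m / P))%R with m by (field; lra). nra.
Qed.

Lemma one_minus_bounded_below x q : (Cmod q < 1)%R -> (forall j, x * q ^ j <> 1) ->
  exists m, (0 < m)%R /\ forall j, (m <= Cmod (1 - x * q ^ j))%R.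
Proof.
  intros Hq Hx. destruct (qpoch_shift_bounded_below x q Hq Hx) as [m [Hm Hmn]].
  exists m. split; [exact Hm|]. intros j.
  specialize (Hmn j 1%nat). simpl in Hmn. now rewrite Cmult_1_l, Cmult_1_r in Hmn.
Qed.

Lemma qpoch_cvg x q : (Cmod q < 1)%R -> filterlim (qpoch x q) eventually (locally (qpinf x q)).
Proof.
  intros Hq. assert (Hq0 := Cmod_ge_0 q).
  set (d := fun j => qpoch x q (S j) - qpoch x q j).
  set (P := exp (Cmod x / (1 - Cmod q))).
  assert (Hd : forall j, (Cmod (d j) <= (P * Cmod x) * Cmod q ^ j)%R).
  { intros j. unfold d. rewrite qpoch_S.
    replace (qpoch x q j * (1 - x * q ^ j) - qpoch x q j) with (- (qpoch x q j * (x * q ^ j))) by ring.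
    rewrite Cmod_opp, !Cmod_mult, Cmod_pow, <- Rmult_assoc.
    apply Rmult_le_compat_r; [apply pow_le, Hq0|].
    apply Rmult_le_compat_r; [apply Cmod_ge_0|]. apply Cmod_qpoch_le; lra. }
  destruct (series_tail_le d _ _ Hd (is_series_geom_scal _ _ (conj Hq0 Hq))) as [[l Hl] _].
  assert (Hsum : forall N, sum_n d N = qpoch x q (S N) - 1).
  { induction N as [|N IH]; [rewrite sum_O; unfold d; simpl; ring|].
    rewrite sum_Sn, IH. unfold d, plus; simpl. ring. }
  assert (Hlim : filterlim (qpoch x q) eventually (locally (1 + l))).
  { apply filterlim_locally_Cmod; [apply eventually_filter|]. intros eps He.
    destruct (proj1 (filterlim_locally_Cmod _ _ _) Hl eps He) as [N HN].
    exists (S N). intros [|n] Hn; [lia|].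
    specialize (HN n ltac:(lia)). rewrite Hsum in HN.
    now replace (qpoch x q (S n) - (1 + l)) with (qpoch x q (S n) - 1 - l) by ring. }
  unfold qpinf. now rewrite (Climseq_unique _ _ Hlim).
Qed.

Lemma qpinf_neq0 x q : (Cmod q < 1)%R -> (forall j, x * q ^ j <> 1) -> qpinf x q <> 0.
Proof.
  intros Hq Hx E. destruct (qpoch_bounded_below x q Hq Hx) as [m [Hm Hmn]].
  assert (H := Cmod_ge_of_filterlim eventually _ _ m (qpoch_cvg x q Hq)
                (ex_intro _ 0%nat (fun n _ => Hmn n))).
  rewrite E, Cmod_0 in H. lra.
Qed.

Lemma qpochs_cons x l q n : qpochs (x :: l) q n = qpoch x q n * qpochs l q n.
Proof. reflexivity. Qed.

Lemma qpochs_bounded l q : (Cmod q < 1)%R ->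
  exists K, (0 <= K)%R /\ forall n, (Cmod (qpochs l q n) <= K)%R.
Proof.
  intros Hq. induction l as [|x l [K [HK0 HK]]].
  - exists 1%R. split; [lra|]. intros n. simpl. rewrite Cmod_1. lra.
  - exists (exp (Cmod x / (1 - Cmod q)) * K)%R.
    split; [apply Rmult_le_pos; [left; apply exp_pos|exact HK0]|].
    intros n. rewrite qpochs_cons, Cmod_mult.
    apply Rmult_le_compat; try apply Cmod_ge_0; [apply Cmod_qpoch_le; lra|apply HK].
Qed.

Lemma qpochs_bounded_below l q : (Cmod q < 1)%R -> (forall x, In x l -> forall j, x * q ^ j <> 1) ->
  exists m, (0 < m)%R /\ forall n, (m <= Cmod (qpochs l q n))%R.
Proof.
  intros Hq. induction l as [|x l IH]; intros Hl.
  - exists 1%R. split; [lra|]. intros n. simpl. rewrite Cmod_1. lra.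
  - destruct IH as [K [HK0 HK]]; [intros y Hy; apply Hl; now right|].
    destruct (qpoch_bounded_below x q Hq) as [m [Hm0 Hm]]; [apply Hl; now left|].
    exists (m * K)%R. split; [now apply Rmult_lt_0_compat|].
    intros n. rewrite qpochs_cons, Cmod_mult. apply Rmult_le_compat; lra || auto.
Qed.

Lemma in_fam (f : nat -> C) m x : In x (fam f m) -> exists j, (j < m)%nat /\ x = f j.
Proof.
  unfold fam. intros H. apply in_map_iff in H. destruct H as [j [E Hj]].
  apply in_seq in Hj. exists j. split; [lia|now symmetry].
Qed.

Definition phi_term (as_ bs : list C) (q x : C) n :=
  qpochs as_ q n / (qpoch q q n * qpochs bs q n) * pow_n x n.

(** * The limit x, y -> oo *)

Fixpoint qprod (u q : C) (n : nat) : C :=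
  match n with O => 1 | S m => qprod u q m * (u - q ^ m) end.

Lemma qpoch_qprod (x q : C) n : x <> 0 -> qpoch x q n = x ^ n * qprod (/ x) q n.
Proof.
  intros Hx. induction n as [|n IH]; [simpl; ring|].
  rewrite qpoch_S, IH. simpl. field. exact Hx.
Qed.

Lemma filterlim_qprod {T} (F : (T -> Prop) -> Prop) {FF : Filter F} (h : T -> C) (u q : C) n :
  filterlim h F (locally u) -> filterlim (fun p => qprod (h p) q n) F (locally (qprod u q n)).
Proof.
  intros H. induction n as [|n IH]; [apply filterlim_const|].
  apply (filterlim_Cmult F); [exact IH|].
  apply (filterlim_Cplus F); [exact H|apply filterlim_const].
Qed.

Lemma filterlim_qpoch {T} (F : (T -> Prop) -> Prop) {FF : Filter F} (h : T -> C) (x q : C) n :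
  filterlim h F (locally x) -> filterlim (fun p => qpoch (h p) q n) F (locally (qpoch x q n)).
Proof.
  intros H. induction n as [|n IH]; [apply filterlim_const|].
  rewrite qpoch_S.
  apply (filterlim_ext (fun p => qpoch (h p) q n * (1 + (- q ^ n) * h p)));
    [intros p; rewrite qpoch_S; ring|].
  replace (1 - x * q ^ n) with (1 + (- q ^ n) * x) by ring.
  apply (filterlim_Cmult F); [exact IH|].
  apply (filterlim_Cplus F); [apply filterlim_const|].
  apply (filterlim_Cmult F); [apply filterlim_const|exact H].
Qed.

Lemma Cmod_qprod_le (u q : C) (rho : R) J n : (0 < rho <= 2)%R ->
  (forall m, Cmod (u - q ^ m) <= 2)%R -> (forall m, (J <= m)%nat -> Cmod (u - q ^ m) <= rho)%R ->
  (Cmod (qprod u q n) <= (2 / rho) ^ J * rho ^ n)%R.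
Proof.
  intros Hrho H2 HJ.
  assert (H1 : (1 <= 2 / rho)%R).
  { apply Rmult_le_reg_r with rho; [lra|]. unfold Rdiv. rewrite Rmult_assoc, Rinv_l; lra. }
  assert (Hmin : (Cmod (qprod u q n) <= (2 / rho) ^ Nat.min n J * rho ^ n)%R).
  { induction n as [|n IH]; [simpl; rewrite Cmod_1; lra|].
    simpl qprod. rewrite Cmod_mult.
    assert (Hpos : (0 <= (2 / rho) ^ Nat.min n J * rho ^ n)%R) by (apply Rmult_le_pos; apply pow_le; lra).
    assert (G0 := Cmod_ge_0 (qprod u q n)). assert (G1 := Cmod_ge_0 (u - q ^ n)).
    destruct (Compare_dec.le_lt_dec J n) as [HnJ|HnJ].
    - replace (Nat.min (S n) J) with (Nat.min n J) by lia.
      apply Rle_trans with ((2 / rho) ^ Nat.min n J * rho ^ n * rho)%R;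
        [apply Rmult_le_compat; auto|simpl; lra].
    - replace (Nat.min (S n) J) with (S (Nat.min n J)) by lia.
      apply Rle_trans with ((2 / rho) ^ Nat.min n J * rho ^ n * 2)%R;
        [apply Rmult_le_compat; auto|simpl; right; field; lra]. }
  eapply Rle_trans; [exact Hmin|].
  apply Rmult_le_compat_r; [apply pow_le; lra|]. apply Rle_pow; [exact H1|lia].
Qed.

(* With [u = 1/x] and [v = 1/y] this is [(x, y; q)_n / ((A q/x, A q/y; q)_n (x y)^n)]. *)
Definition xy_weight (A q u v : C) n :=
  qprod u q n * qprod v q n / (qpoch (A * q * u) q n * qpoch (A * q * v) q n).

Lemma xy_weight_0_0_O A q : xy_weight A q 0 0 0 = 1.
Proof. unfold xy_weight. simpl. field. Qed.

Lemma xy_weight_0_0_S A q n : xy_weight A q 0 0 (S n) = xy_weight A q 0 0 n * (q ^ n * q ^ n).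
Proof.
  unfold xy_weight. rewrite !Cmult_0_r, !qpoch_0_l. simpl. field.
Qed.

Lemma Cmod_qprod_small (q : C) (rho : R) : (Cmod q < 1)%R -> (0 < rho <= 1 / 2)%R ->
  exists K, (0 <= K)%R /\ forall u n, (Cmod u <= rho / 2)%R -> (Cmod (qprod u q n) <= K * rho ^ n)%R.
Proof.
  intros Hq Hrho. assert (Hq0 := Cmod_ge_0 q).
  destruct (geom_eventually_lt 1 (Cmod q) ltac:(lra) (rho / 2) ltac:(lra)) as [J HJ].
  exists ((2 / rho) ^ J)%R. split; [apply pow_le, Rdiv_le_0_compat; lra|].
  intros u n Hu. apply Cmod_qprod_le; [lra| |].
  - intros m. eapply Rle_trans; [apply Cmod_triangle|]. rewrite Cmod_opp, Cmod_pow.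
    assert (Cmod q ^ m <= 1)%R by (apply pow_le_one; lra). lra.
  - intros m Hm. eapply Rle_trans; [apply Cmod_triangle|]. rewrite Cmod_opp, Cmod_pow.
    specialize (HJ m Hm). lra.
Qed.

Lemma Cmod_qpoch_mul_ge_half (A q u : C) n : (Cmod q < 1)%R ->
  (Cmod u <= (1 - Cmod q) / (2 * (Cmod A + 1)))%R -> (1 / 2 <= Cmod (qpoch (A * q * u) q n))%R.
Proof.
  intros Hq Hu. apply Cmod_qpoch_ge_half; [exact Hq|].
  assert (Hq0 := Cmod_ge_0 q). assert (HA := Cmod_ge_0 A). assert (Hu0 := Cmod_ge_0 u).
  apply Rle_trans with ((Cmod A + 1) * ((1 - Cmod q) / (2 * (Cmod A + 1))))%R; [|right; field; lra].
  rewrite !Cmod_mult. apply Rmult_le_compat; nra.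
Qed.

Lemma xy_weight_bound (A q beta : C) : (Cmod q < 1)%R ->
  exists d K, (0 < d)%R /\ (0 <= K)%R /\
    forall u v n, (Cmod u <= d)%R -> (Cmod v <= d)%R ->
      (Cmod (xy_weight A q u v n) * Cmod beta ^ n <= K * (1 / 4) ^ n)%R.
Proof.
  intros Hq. assert (Hq0 := Cmod_ge_0 q). assert (HA := Cmod_ge_0 A). assert (Hb := Cmod_ge_0 beta).
  set (rho := (1 / (2 * (Cmod beta + 1)))%R).
  assert (Hrho : (0 < rho <= 1 / 2)%R).
  { unfold rho. split; [apply Rdiv_lt_0_compat; lra|].
    apply Rmult_le_reg_r with (2 * (Cmod beta + 1))%R; [lra|]. field_simplify; lra. }
  assert (Hrb : (rho * Cmod beta <= 1 / 2)%R).
  { apply Rmult_le_reg_r with (2 * (Cmod beta + 1))%R; [lra|]. unfold rho. field_simplify; lra. }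
  destruct (Cmod_qprod_small q rho Hq Hrho) as [K [HK Hprod]].
  set (d := Rmin (rho / 2) ((1 - Cmod q) / (2 * (Cmod A + 1)))).
  assert (Hd1 : (d <= rho / 2)%R) by apply Rmin_l.
  assert (Hd2 : (d <= (1 - Cmod q) / (2 * (Cmod A + 1)))%R) by apply Rmin_r.
  assert (Hd0 : (0 < d)%R) by (apply Rmin_glb_lt; [lra|apply Rdiv_lt_0_compat; lra]).
  exists d, (4 * K ^ 2)%R. split; [exact Hd0|]. split; [nra|].
  intros u v n Hu Hv.
  assert (Hu1 := Hprod u n ltac:(lra)). assert (Hv1 := Hprod v n ltac:(lra)).
  assert (Hu2 := Cmod_qpoch_mul_ge_half A q u n Hq ltac:(lra)).
  assert (Hv2 := Cmod_qpoch_mul_ge_half A q v n Hq ltac:(lra)).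
  assert (Hden : qpoch (A * q * u) q n * qpoch (A * q * v) q n <> 0).
  { apply Cmult_neq_0; intros E; [rewrite E, Cmod_0 in Hu2|rewrite E, Cmod_0 in Hv2]; lra. }
  unfold xy_weight. rewrite Cmod_div by exact Hden. rewrite !Cmod_mult.
  assert (G1 := Cmod_ge_0 (qprod u q n)). assert (G2 := Cmod_ge_0 (qprod v q n)).
  assert (Hrn : (0 <= rho ^ n)%R) by (apply pow_le; lra).
  assert (Hbn : (0 <= Cmod beta ^ n)%R) by (apply pow_le; lra).
  apply Rle_trans with (K * rho ^ n * (K * rho ^ n) * 4 * Cmod beta ^ n)%R.
  - apply Rmult_le_compat_r; [exact Hbn|].
    assert (Hinv : (/ (Cmod (qpoch (A * q * u) q n) * Cmod (qpoch (A * q * v) q n)) <= 4)%R).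
    { replace 4%R with (/ (1 / 2 * (1 / 2)))%R by field. apply Rinv_le_contravar; [lra|].
      apply Rmult_le_compat; lra. }
    unfold Rdiv. apply Rmult_le_compat; [nra|apply Rlt_le, Rinv_0_lt_compat; nra| |exact Hinv].
    apply Rmult_le_compat; lra.
  - replace (K * rho ^ n * (K * rho ^ n) * 4 * Cmod beta ^ n)%R
      with (4 * K ^ 2 * (rho * rho * Cmod beta) ^ n)%R by (rewrite !Rpow_mult_distr; ring).
    apply Rmult_le_compat_l; [nra|]. apply pow_incr. split; nra.
Qed.

#[local] Instance infty2_filter : ProperFilter infty2.
Proof.
  constructor.
  - intros P [M HM]. set (t := (Rabs M + 1)%R).
    assert (Ht : (M < Cmod (RtoC t))%R).
    { rewrite Cmod_R. unfold t. rewrite Rabs_pos_eq; [|assert (0 <= Rabs M)%R by apply Rabs_pos; lra].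
      assert (M <= Rabs M)%R by apply RRle_abs. lra. }
    exists (RtoC t, RtoC t). now apply HM.
  - constructor.
    + exists 0%R. auto.
    + intros P Q [M1 H1] [M2 H2]. exists (Rmax M1 M2). intros x y Hx Hy.
      split; [apply H1|apply H2]; eapply Rle_lt_trans; eauto;
        [apply Rmax_l|apply Rmax_l|apply Rmax_r|apply Rmax_r].
    + intros P Q HPQ [M HM]. exists M. intros x y Hx Hy. now apply HPQ, HM.
Qed.

Lemma infty2_inv_small (d : R) : (0 < d)%R ->
  infty2 (fun p => fst p <> 0 /\ snd p <> 0 /\ (Cmod (/ fst p) <= d)%R /\ (Cmod (/ snd p) <= d)%R).
Proof.
  intros Hd.
  assert (Hsmall : forall x : C, (/ d < Cmod x)%R -> x <> 0 /\ (Cmod (/ x) <= d)%R).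
  { intros x Hx. assert (0 < / d)%R by (now apply Rinv_0_lt_compat).
    assert (Hx0 : x <> 0) by (intros E; rewrite E, Cmod_0 in Hx; lra).
    split; [exact Hx0|]. rewrite Cmod_inv by exact Hx0.
    rewrite <- (Rinv_inv d). left. apply Rinv_lt_contravar; nra. }
  exists (/ d)%R. intros x y Hx Hy. simpl.
  destruct (Hsmall x Hx). destruct (Hsmall y Hy). tauto.
Qed.

Lemma filterlim_inv_fst : filterlim (fun p : C * C => / fst p) infty2 (locally (RtoC 0)).
Proof.
  apply filterlim_locally_Cmod; [apply infty2_filter|]. intros eps He.
  refine (filter_imp (F := infty2) _ _ _ (infty2_inv_small (eps / 2) ltac:(lra))).
  intros p (_ & _ & Hp & _).
  replace (/ fst p - 0) with (/ fst p) by ring. lra.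
Qed.

Lemma filterlim_inv_snd : filterlim (fun p : C * C => / snd p) infty2 (locally (RtoC 0)).
Proof.
  apply filterlim_locally_Cmod; [apply infty2_filter|]. intros eps He.
  refine (filter_imp (F := infty2) _ _ _ (infty2_inv_small (eps / 2) ltac:(lra))).
  intros p (_ & _ & _ & Hp).
  replace (/ snd p - 0) with (/ snd p) by ring. lra.
Qed.

Lemma filterlim_xy_weight (A q : C) n :
  filterlim (fun p : C * C => xy_weight A q (/ fst p) (/ snd p) n) infty2
    (locally (xy_weight A q 0 0 n)).
Proof.
  unfold xy_weight, Cdiv.
  apply (filterlim_Cmult infty2).
  - apply (filterlim_Cmult infty2); apply (filterlim_qprod infty2);
      [apply filterlim_inv_fst|apply filterlim_inv_snd].
  - apply (filterlim_Cinv infty2).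
    + rewrite !Cmult_0_r, !qpoch_0_l. intros E. injection E. lra.
    + apply (filterlim_Cmult infty2); apply (filterlim_qpoch infty2);
        apply (filterlim_Cmult infty2 (fun _ => A * q)); try apply filterlim_const;
        [apply filterlim_inv_fst|apply filterlim_inv_snd].
Qed.

(** * Expanding the right-hand side *)

Section Expansion.

Variables a b z q w : C.
Hypothesis Hq : (Cmod q < 1)%R.
Hypothesis Hb : b <> 0.
Hypothesis Hw : w * w = a * z.
Hypothesis Haz : forall k, a * z * q ^ k <> 1.
Hypothesis Hbz : forall k, b * z * q ^ k <> 1.

Definition ocoef n :=
  qpoch (a * z) q n * qpoch (w * q) q n * qpoch (- w * q) q n * qpoch (a * q / b) q n
  / (qpoch q q n * qpoch w q n * qpoch (- w) q n * qpoch (b * z) q n) * (b * z) ^ n.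

Definition ycoef n k :=
  qpoch (a * z * q ^ n) q k * (1 - a * z * (q ^ n * q ^ n * q ^ k))
  / ((1 - a * z * (q ^ n * q ^ n)) * qpoch (b * z * q ^ n) q k) * (q ^ n) ^ k.

(* [gweight n = q^(n (n - 1))], the limit of [xy_weight] as [x, y -> oo]. *)
Definition gweight n := xy_weight (a * z) q 0 0 n.

Definition cterm n k :=
  gweight n * qpoch (a * z) q (n + k) / qpoch (b * z) q (n + k) / (1 - a * z)
  * qpoch (a * q / b) q n / qpoch q q n * (b * z) ^ n * (q ^ n) ^ k.

Definition zterm n k := cterm n k * (1 - a * z * (q ^ n * q ^ n * q ^ k)).

Definition wterm n k := - (cterm n k * (1 - q ^ n)).

Let az_neq1 : 1 - a * z <> 0.
Proof. apply one_minus_neq0. rewrite <- (Cmult_1_r (a * z)). exact (Haz 0). Qed.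

Let az_q2n_neq1 n : 1 - a * z * (q ^ n * q ^ n) <> 0.
Proof. apply one_minus_neq0. rewrite <- Cpow_add_r. apply Haz. Qed.

Let bz_q2_neq1 n k : 1 - b * z * (q ^ n * q ^ k) <> 0.
Proof. apply one_minus_neq0. rewrite <- Cpow_add_r. apply Hbz. Qed.

Let qpoch_bz_neq0 n : qpoch (b * z) q n <> 0.
Proof. now apply qpoch_neq0. Qed.

Let qpoch_bzq_neq0 n k : qpoch (b * z * q ^ n) q k <> 0.
Proof. now apply qpoch_shift_neq0. Qed.

Let qpoch_q_neq0 n : qpoch q q n <> 0.
Proof. apply qpoch_neq0. intros j. now apply qpoch_q_neq1. Qed.

Let qpoch_w_neq0 n : qpoch w q n <> 0.
Proof. apply qpoch_neq0. intros j. now apply (sqrt_mul_pow_neq1 w (a * z)). Qed.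

Let qpoch_mw_neq0 n : qpoch (- w) q n <> 0.
Proof.
  apply qpoch_neq0. intros j. apply (sqrt_mul_pow_neq1 (- w) (a * z)); [|exact Haz].
  rewrite <- Hw. ring.
Qed.

Lemma ocoef_closed n : ocoef n =
  qpoch (a * z) q n * (1 - a * z * (q ^ n * q ^ n)) * qpoch (a * q / b) q n
  / ((1 - a * z) * qpoch q q n * qpoch (b * z) q n) * (b * z) ^ n.
Proof.
  assert (Hmw : - w * - w = a * z) by (rewrite <- Hw; ring).
  assert (Hmwq0 : qpoch (- w * q) q n <> 0).
  { apply qpoch_neq0. intros j. replace (- w * q * q ^ j) with (- w * q ^ S j) by (simpl; ring).
    now apply (sqrt_mul_pow_neq1 (- w) (a * z)). }
  assert (H := qpoch_pm_sqrt w (a * z) q n Hw).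
  unfold ocoef.
  replace (qpoch (w * q) q n) with
    (qpoch w q n * qpoch (- w) q n * (1 - a * z * (q ^ n * q ^ n)) / ((1 - a * z) * qpoch (- w * q) q n))
    by (rewrite <- H; field; auto).
  field. repeat split; auto.
Qed.

Lemma zterm_factor n k : gweight n * ocoef n * ycoef n k = zterm n k.
Proof.
  rewrite ocoef_closed. unfold ycoef, zterm, cterm. rewrite !qpoch_add.
  field. repeat split; auto.
Qed.

Lemma zterm_telescope n k : zterm n k - zterm n (S k) = wterm (S n) k - wterm n k.
Proof.
  unfold zterm, wterm, cterm, gweight. rewrite xy_weight_0_0_S.
  rewrite Nat.add_succ_r, Nat.add_succ_l, !qpoch_S, !Cpow_add_r, !Cpow_S, (Cpow_mult_l q (q ^ n) k).
  field. repeat split; auto. now apply one_minus_neq0, qpoch_q_neq1.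
Qed.

Lemma zterm_0 k : zterm 0 k = qpoch (a * z * q) q k / qpoch (b * z) q k.
Proof.
  unfold zterm, cterm, gweight. rewrite xy_weight_0_0_O. simpl (0 + k)%nat. simpl (q ^ 0).
  rewrite Cpow_1_l.
  replace (qpoch (a * z * q) q k) with (qpoch (a * z) q k * (1 - a * z * q ^ k) / (1 - a * z))
    by (rewrite <- qpoch_mul_q; field; auto).
  simpl. field. auto.
Qed.

Lemma cterm_bound : exists K, (0 <= K)%R /\
  forall n k, (Cmod (cterm n k) <= K * (1 / 4) ^ n * (Cmod q ^ n) ^ k)%R.
Proof.
  destruct (xy_weight_bound (a * z) q (b * z) Hq) as [d [K0 [Hd [HK0 Hgw]]]].
  destruct (qpoch_bounded_below (b * z) q Hq Hbz) as [mb [Hmb Hmbn]].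
  destruct (qpoch_bounded_below q q Hq (fun j => qpoch_q_neq1 q j Hq)) as [mq [Hmq Hmqn]].
  set (Pa := exp (Cmod (a * z) / (1 - Cmod q))).
  set (Pb := exp (Cmod (a * q / b) / (1 - Cmod q))).
  assert (Haz0 := proj1 (Cmod_gt_0 _) az_neq1).
  set (X := (Pa / mb / Cmod (1 - a * z) * Pb / mq)%R).
  assert (HX : (0 <= X)%R).
  { unfold X, Pa, Pb. assert (0 < exp (Cmod (a * z) / (1 - Cmod q)))%R by apply exp_pos.
    assert (0 < exp (Cmod (a * q / b) / (1 - Cmod q)))%R by apply exp_pos.
    unfold Rdiv. repeat apply Rmult_le_pos; try lra; left; apply Rinv_0_lt_compat; lra. }
  exists (K0 * X)%R. split; [now apply Rmult_le_pos|]. intros n k.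
  assert (Hrest : (Cmod (qpoch (a * z) q (n + k) / qpoch (b * z) q (n + k) / (1 - a * z)
                         * qpoch (a * q / b) q n / qpoch q q n) <= X)%R).
  { apply Cmod_div_le; [|exact Hmq|apply Hmqn].
    apply Cmod_mult_le; [|apply Cmod_qpoch_le; lra].
    apply Cmod_div_le; [|exact Haz0|lra].
    apply Cmod_div_le; [apply Cmod_qpoch_le; lra|exact Hmb|apply Hmbn]. }
  assert (Hg := Hgw 0 0 n ltac:(rewrite Cmod_0; lra) ltac:(rewrite Cmod_0; lra)).
  unfold cterm. fold (gweight n) in Hg.
  replace (gweight n * qpoch (a * z) q (n + k) / qpoch (b * z) q (n + k) / (1 - a * z)
             * qpoch (a * q / b) q n / qpoch q q n * (b * z) ^ n * (q ^ n) ^ k)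
    with ((gweight n * (b * z) ^ n) * (qpoch (a * z) q (n + k) / qpoch (b * z) q (n + k) / (1 - a * z)
             * qpoch (a * q / b) q n / qpoch q q n) * (q ^ n) ^ k) by (unfold Cdiv; ring).
  rewrite !Cmod_mult, !Cmod_pow.
  assert (0 <= (Cmod q ^ n) ^ k)%R by (apply pow_le, pow_le, Cmod_ge_0).
  apply Rmult_le_compat_r; [assumption|].
  replace (K0 * X * (1 / 4) ^ n)%R with (K0 * (1 / 4) ^ n * X)%R by ring.
  apply Rmult_le_compat; auto using Cmod_ge_0.
  apply Rmult_le_pos; [apply Cmod_ge_0|apply pow_le, Cmod_ge_0].
Qed.

Lemma zterm_bound : exists K, (0 <= K)%R /\
  forall n k, (Cmod (zterm n k) <= K * (1 / 4) ^ n * (Cmod q ^ n) ^ k)%R.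
Proof.
  destruct cterm_bound as [K [HK HKc]].
  exists (K * (1 + Cmod (a * z)))%R. split; [apply Rmult_le_pos; [|assert (H := Cmod_ge_0 (a * z))]; lra|].
  intros n k. unfold zterm. rewrite <- !Cpow_add_r.
  replace (K * (1 + Cmod (a * z)) * (1 / 4) ^ n * (Cmod q ^ n) ^ k)%R
    with (K * (1 / 4) ^ n * (Cmod q ^ n) ^ k * (1 + Cmod (a * z)))%R by ring.
  apply Cmod_mult_le; [apply HKc|apply Cmod_one_minus_mul_pow_le; lra].
Qed.

Lemma zterm_geom_bound : exists K, (0 <= K)%R /\ forall n k, (Cmod (zterm n k) <= K * (1 / 4) ^ n)%R.
Proof.
  destruct zterm_bound as [K [HK HKz]]. exists K. split; [exact HK|]. intros n k.
  eapply Rle_trans; [apply HKz|].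
  assert (Hp := pow_pow_le_one (Cmod q) n k (conj (Cmod_ge_0 q) (Rlt_le _ _ Hq))).
  assert (0 <= K * (1 / 4) ^ n)%R by (apply Rmult_le_pos; [|apply pow_le]; lra).
  nra.
Qed.

Lemma wterm_bound : exists K, (0 <= K)%R /\ forall n k, (Cmod (wterm n k) <= K * (1 / 4) ^ n)%R.
Proof.
  destruct cterm_bound as [K [HK HKc]].
  exists (K * 2)%R. split; [lra|]. intros n k. unfold wterm. rewrite Cmod_opp.
  assert (Hp := pow_pow_le_one (Cmod q) n k (conj (Cmod_ge_0 q) (Rlt_le _ _ Hq))).
  assert (Hc : (Cmod (cterm n k) <= K * (1 / 4) ^ n)%R).
  { eapply Rle_trans; [apply HKc|].
    assert (0 <= K * (1 / 4) ^ n)%R by (apply Rmult_le_pos; [|apply pow_le]; lra). nra. }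
  replace (K * 2 * (1 / 4) ^ n)%R with (K * (1 / 4) ^ n * (1 + 1))%R by ring.
  apply Cmod_mult_le; [exact Hc|].
  eapply Rle_trans; [apply Cmod_one_minus_le|]. rewrite Cmod_pow.
  assert (Cmod q ^ n <= 1)%R by (apply pow_le_one; split; [apply Cmod_ge_0|lra]). lra.
Qed.

Lemma ex_series_zterm k : ex_series (fun n => zterm n k).
Proof.
  destruct zterm_geom_bound as [K [HK HKz]].
  exact (proj1 (series_tail_le _ _ _ (fun n => HKz n k) (is_series_geom_scal K (1 / 4) ltac:(lra)))).
Qed.

Lemma zsum_shift k : CSeries (fun n => zterm n k) = CSeries (fun n => zterm n (S k)).
Proof.
  destruct wterm_bound as [K [HK HKw]].
  assert (Hsum : forall N, sum_n (fun n => zterm n k - zterm n (S k)) N = wterm (S N) k).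
  { assert (Hw0 : wterm 0 k = 0) by (unfold wterm; change (q ^ 0) with (RtoC 1); ring).
    induction N as [|N IH].
    - rewrite sum_O. change (zterm 0 k - zterm 0 (S k) = wterm 1 k).
      rewrite zterm_telescope, Hw0. ring.
    - rewrite sum_Sn, IH.
      change (wterm (S N) k + (zterm (S N) k - zterm (S N) (S k)) = wterm (S (S N)) k).
      rewrite zterm_telescope. ring. }
  assert (Hlim : is_series (fun n => zterm n k - zterm n (S k)) (RtoC 0)).
  { unfold is_series. apply (filterlim_ext (fun N => wterm (S N) k)); [intros N; now rewrite Hsum|].
    apply (filterlim_geom_bound_0 _ (K / 4) (1 / 4)); [lra|]. intros N.
    replace (K / 4 * (1 / 4) ^ N)%R with (K * (1 / 4) ^ S N)%R by (simpl; field). apply HKw. }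
  assert (E := filterlim_locally_unique (F := eventually) _ _ _
                (is_series_minus _ _ _ _ (CSeries_correct _ (ex_series_zterm k))
                   (CSeries_correct _ (ex_series_zterm (S k)))) Hlim).
  change (CSeries (fun n => zterm n k) - CSeries (fun n => zterm n (S k)) = 0) in E.
  rewrite <- (Cplus_0_l (CSeries (fun n => zterm n (S k)))), <- E. ring.
Qed.

Lemma zsum_tail_bound : exists K, (0 <= K)%R /\
  forall k, (Cmod (CSeries (fun n => zterm n k) - zterm 0 k) <= K * Cmod q ^ k)%R.
Proof.
  destruct zterm_bound as [K [HK HKz]].
  assert (Hq1 : (0 <= Cmod q <= 1)%R) by (split; [apply Cmod_ge_0|lra]).
  exists (K / (1 - 1 / 4))%R. split; [apply Rdiv_le_0_compat; lra|]. intros k.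
  rewrite <- (CSeries_unique _ _ (is_series_tail _ _ (CSeries_correct _ (ex_series_zterm k)))).
  replace (K / (1 - 1 / 4) * Cmod q ^ k)%R with (K * Cmod q ^ k / (1 - 1 / 4))%R by (field; lra).
  apply (CSeries_Cmod_le _ (fun n => K * Cmod q ^ k * (1 / 4) ^ n)%R); [|apply is_series_geom_scal; lra].
  intros n. eapply Rle_trans; [apply HKz|].
  replace (K * (1 / 4) ^ S n * (Cmod q ^ S n) ^ k)%R
    with (K * Cmod q ^ k * (1 / 4) ^ n * (1 / 4 * (Cmod q ^ n) ^ k))%R
    by (simpl; rewrite Rpow_mult_distr; ring).
  assert (Hp := pow_pow_le_one (Cmod q) n k Hq1).
  assert (0 <= (Cmod q ^ n) ^ k)%R by (apply pow_le, pow_le; lra).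
  assert (0 <= K * Cmod q ^ k * (1 / 4) ^ n)%R by (repeat apply Rmult_le_pos; try apply pow_le; lra).
  nra.
Qed.

Lemma zsum_cvg : filterlim (fun k => CSeries (fun n => zterm n k)) eventually
                   (locally (qpinf (a * z * q) q / qpinf (b * z) q)).
Proof.
  destruct zsum_tail_bound as [K [HK HKt]].
  apply (filterlim_ext (fun k => zterm 0 k + (CSeries (fun n => zterm n k) - zterm 0 k)));
    [intros k; ring|].
  rewrite <- (Cplus_0_r (qpinf (a * z * q) q / qpinf (b * z) q)).
  apply (filterlim_Cplus eventually).
  - apply (filterlim_ext (fun k => qpoch (a * z * q) q k * / qpoch (b * z) q k));
      [intros k; now rewrite zterm_0|].
    apply (filterlim_Cmult eventually); [now apply qpoch_cvg|].
    apply (filterlim_Cinv eventually); [now apply qpinf_neq0|now apply qpoch_cvg].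
  - exact (filterlim_geom_bound_0 _ K (Cmod q) (conj (Cmod_ge_0 q) Hq) HKt).
Qed.

Lemma is_series_zterm k : is_series (fun n => zterm n k) (qpinf (a * z * q) q / qpinf (b * z) q).
Proof.
  assert (Hconst : forall k, CSeries (fun n => zterm n k) = CSeries (fun n => zterm n 0)).
  { intros m. induction m as [|m IH]; [reflexivity|]. now rewrite <- zsum_shift. }
  assert (E : CSeries (fun n => zterm n 0) = qpinf (a * z * q) q / qpinf (b * z) q).
  { apply (filterlim_locally_unique (F := eventually) (fun _ => CSeries (fun n => zterm n 0)));
      [apply filterlim_const|].
    apply (filterlim_ext (fun m => CSeries (fun n => zterm n m))); [apply Hconst|exact zsum_cvg]. }
  rewrite <- E, <- (Hconst k). apply CSeries_correct, ex_series_zterm.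
Qed.

Lemma ycoef_bound : exists K, (0 <= K)%R /\ forall n k, (Cmod (ycoef n k) <= K)%R.
Proof.
  destruct (one_minus_bounded_below (a * z) q Hq Haz) as [m1 [Hm1 Hm1j]].
  destruct (qpoch_shift_bounded_below (b * z) q Hq Hbz) as [m2 [Hm2 Hm2n]].
  assert (Hq1 : (Cmod q <= 1)%R) by lra.
  set (Pa := exp (Cmod (a * z) / (1 - Cmod q))).
  assert (HPa : (0 < Pa)%R) by apply exp_pos.
  assert (Haz0 := Cmod_ge_0 (a * z)).
  exists (Pa * (1 + Cmod (a * z)) / (m1 * m2))%R.
  split; [apply Rdiv_le_0_compat; [apply Rmult_le_pos|apply Rmult_lt_0_compat]; lra|].
  intros n k. unfold ycoef.
  rewrite <- (Rmult_1_r (Pa * (1 + Cmod (a * z)) / (m1 * m2))).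
  apply Cmod_mult_le; [|rewrite Cmod_pow; apply pow_le_one; split; [apply Cmod_ge_0|]; 
                         rewrite Cmod_pow; apply pow_le_one; split; [apply Cmod_ge_0|lra]].
  apply Cmod_div_le; [| now apply Rmult_lt_0_compat|].
  - rewrite <- !Cpow_add_r. apply Cmod_mult_le; [|now apply Cmod_one_minus_mul_pow_le].
    apply Cmod_qpoch_le; [exact Hq|now apply Cmod_mul_pow_le].
  - rewrite Cmod_mult, <- Cpow_add_r. apply Rmult_le_compat; [lra|lra|apply Hm1j|apply Hm2n].
Qed.

Lemma ocoef_bound : exists K, (0 <= K)%R /\ forall n, (Cmod (ocoef n) <= K * Cmod (b * z) ^ n)%R.
Proof.
  destruct (qpoch_bounded_below (b * z) q Hq Hbz) as [mb [Hmb Hmbn]].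
  destruct (qpoch_bounded_below q q Hq (fun j => qpoch_q_neq1 q j Hq)) as [mq [Hmq Hmqn]].
  set (Pa := exp (Cmod (a * z) / (1 - Cmod q))).
  set (Pb := exp (Cmod (a * q / b) / (1 - Cmod q))).
  assert (HPa : (0 < Pa)%R) by apply exp_pos.
  assert (HPb : (0 < Pb)%R) by apply exp_pos.
  assert (Haz0 := Cmod_ge_0 (a * z)).
  assert (H1 := proj1 (Cmod_gt_0 _) az_neq1).
  exists (Pa * (1 + Cmod (a * z)) * Pb / (Cmod (1 - a * z) * mq * mb))%R.
  split; [apply Rdiv_le_0_compat; [repeat apply Rmult_le_pos|repeat apply Rmult_lt_0_compat]; lra|].
  intros n. rewrite ocoef_closed, Cmod_mult, Cmod_pow.
  apply Rmult_le_compat_r; [apply pow_le, Cmod_ge_0|].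
  apply Cmod_div_le; [|repeat apply Rmult_lt_0_compat; lra|].
  - rewrite <- Cpow_add_r.
    repeat apply Cmod_mult_le; try (apply Cmod_qpoch_le; lra).
    apply Cmod_one_minus_mul_pow_le; lra.
  - rewrite !Cmod_mult. repeat apply Rmult_le_compat; try nra; auto.
Qed.

Variable r : nat.
Variable c : C.
Variables A B : nat -> C.
Hypothesis Hcz : (Cmod (c * z) < 1)%R.
Hypothesis HB : forall j k, (j < r)%nat -> B j * q ^ k <> 1.

Definition acoef := phi_term (fam A (S r)) (fam B r) q (c * z).

Definition Phi n :=
  phi (a * z * pow_n q n :: a * z * pow_n q (2 * n + 1) :: fam A (S r))
      (b * z * pow_n q n :: a * z * pow_n q (2 * n) :: fam B r) q (c * z * pow_n q n).

Let qpochs_B_bounded_below : exists m, (0 < m)%R /\ forall n, (m <= Cmod (qpochs (fam B r) q n))%R.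
Proof.
  apply qpochs_bounded_below; [exact Hq|]. intros x Hx j.
  destruct (in_fam B r x Hx) as [i [Hi ->]]. now apply HB.
Qed.

Lemma Phi_expand n : Phi n = CSeries (fun k => acoef k * ycoef n k).
Proof.
  unfold Phi, phi. f_equal. apply functional_extensionality. intros k.
  unfold acoef, phi_term, ycoef. rewrite !qpochs_cons.
  rewrite (pow_n_Cpow q n), (pow_n_Cpow q (2 * n + 1)), (pow_n_Cpow q (2 * n)),
    (pow_n_Cpow (c * z * q ^ n) k), (pow_n_Cpow (c * z) k), Cpow_mult_l.
  assert (E2 : q ^ (2 * n) = q ^ n * q ^ n) by (rewrite <- Cpow_add_r; f_equal; lia).
  rewrite Cpow_add_r, Cpow_1_r, E2.
  replace (a * z * (q ^ n * q ^ n * q)) with (a * z * (q ^ n * q ^ n) * q) by ring.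
  replace (qpoch (a * z * (q ^ n * q ^ n) * q) q k) with
    (qpoch (a * z * (q ^ n * q ^ n)) q k * (1 - a * z * (q ^ n * q ^ n) * q ^ k)
     / (1 - a * z * (q ^ n * q ^ n)))
    by (rewrite <- qpoch_mul_q; field; auto).
  assert (HBk : qpochs (fam B r) q k <> 0).
  { destruct qpochs_B_bounded_below as [m [Hm Hmn]].
    intros E. specialize (Hmn k). rewrite E, Cmod_0 in Hmn. lra. }
  assert (qpoch (a * z * (q ^ n * q ^ n)) q k <> 0) by (rewrite <- Cpow_add_r; now apply qpoch_shift_neq0).
  field. repeat split; auto.
Qed.

Lemma acoef_bound : exists K, (0 <= K)%R /\ forall k, (Cmod (acoef k) <= K * Cmod (c * z) ^ k)%R.
Proof.
  destruct (qpochs_bounded (fam A (S r)) q Hq) as [Ka [HKa HKan]].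
  destruct qpochs_B_bounded_below as [mb [Hmb Hmbn]].
  destruct (qpoch_bounded_below q q Hq (fun j => qpoch_q_neq1 q j Hq)) as [mq [Hmq Hmqn]].
  exists (Ka / (mq * mb))%R. split; [apply Rdiv_le_0_compat; nra|].
  intros k. unfold acoef, phi_term. rewrite pow_n_Cpow, Cmod_mult, Cmod_pow.
  apply Rmult_le_compat_r; [apply pow_le, Cmod_ge_0|].
  apply Cmod_div_le; [apply HKan|nra|]. rewrite Cmod_mult. apply Rmult_le_compat; lra || auto.
Qed.

Lemma ex_series_acoef : ex_series acoef.
Proof.
  destruct acoef_bound as [K [HK HKa]].
  exact (proj1 (series_tail_le _ _ _ HKa (is_series_geom_scal K _ (conj (Cmod_ge_0 _) Hcz)))).
Qed.

Lemma Phi_bound : exists K, (0 <= K)%R /\ forall n,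
  ex_series (fun k => acoef k * ycoef n k) /\ (Cmod (Phi n) <= K)%R.
Proof.
  destruct acoef_bound as [Ka [HKa HKan]].
  destruct ycoef_bound as [Ky [HKy HKyn]].
  assert (Hcz0 := Cmod_ge_0 (c * z)).
  exists (Ka * Ky / (1 - Cmod (c * z)))%R. split; [apply Rdiv_le_0_compat; nra|].
  intros n. rewrite Phi_expand.
  apply (CSeries_Cmod_le _ (fun k => Ka * Ky * Cmod (c * z) ^ k)%R); [|apply is_series_geom_scal; lra].
  intros k. replace (Ka * Ky * Cmod (c * z) ^ k)%R with (Ka * Cmod (c * z) ^ k * Ky)%R by ring.
  apply Cmod_mult_le; [apply HKan|apply HKyn].
Qed.

Lemma acoef_zterm_sum_bound : exists K, (0 <= K)%R /\
  forall N n, (Cmod (sum_n (fun k => (acoef k * zterm n k)%C) N) <= K * (1 / 4) ^ n)%R.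
Proof.
  destruct acoef_bound as [Ka [HKa HKan]].
  destruct zterm_geom_bound as [Kz [HKz HKzn]].
  assert (Hcz0 := Cmod_ge_0 (c * z)).
  set (Sa := (Ka / (1 - Cmod (c * z)))%R).
  exists (Sa * Kz)%R. split; [apply Rmult_le_pos; [apply Rdiv_le_0_compat|]; lra|]. intros N n.
  eapply Rle_trans; [apply (norm_sum_n_m (V := C_NormedModule))|].
  apply Rle_trans with (sum_n (fun k => Kz * (1 / 4) ^ n * (Ka * Cmod (c * z) ^ k))%R N).
  { apply sum_n_m_le. intros k. rewrite Rmult_comm. apply Cmod_mult_le; [apply HKan|apply HKzn]. }
  rewrite (sum_n_mult_l (K := R_Ring)).
  replace (Sa * Kz * (1 / 4) ^ n)%R with (Kz * (1 / 4) ^ n * Sa)%R by ring.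
  apply Rmult_le_compat_l; [apply Rmult_le_pos; [|apply pow_le]; lra|].
  apply sum_n_le_series; [intros k; apply Rmult_le_pos; [|apply pow_le]; lra|].
  apply is_series_geom_scal. lra.
Qed.

Lemma is_series_acoef_zterm_sum N :
  is_series (fun n => sum_n (fun k => acoef k * zterm n k) N)
    (qpinf (a * z * q) q / qpinf (b * z) q * sum_n acoef N).
Proof.
  set (L := qpinf (a * z * q) q / qpinf (b * z) q).
  replace (L * sum_n acoef N) with (sum_n (fun k => acoef k * L) N).
  - apply is_series_sum_n_scal. intros k. apply is_series_zterm.
  - transitivity (sum_n (fun k => mult L (acoef k)) N); [|exact (sum_n_mult_l (K := C_Ring) L acoef N)].
    apply sum_n_ext. intros k. change (acoef k * L = L * acoef k). ring.
Qed.

Lemma is_series_xy_limit :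
  is_series (fun n => gweight n * ocoef n * Phi n)
    (qpinf (a * z * q) q / qpinf (b * z) q * phi (fam A (S r)) (fam B r) q (c * z)).
Proof.
  destruct acoef_zterm_sum_bound as [K [HK HKs]].
  destruct Phi_bound as [KP [HKP HKPn]].
  set (L := qpinf (a * z * q) q / qpinf (b * z) q).
  set (f := fun N n => sum_n (fun k => acoef k * zterm n k) N).
  assert (Hlim : forall n, filterlim (fun N => f N n) eventually (locally (gweight n * ocoef n * Phi n))).
  { intros n.
    apply (filterlim_ext (fun N : nat => gweight n * ocoef n * sum_n (fun k => acoef k * ycoef n k) N)).
    - intros N. unfold f. rewrite <- (sum_n_mult_l (K := C_Ring)). apply sum_n_ext. intros k.
      rewrite <- zterm_factor. change (gweight n * ocoef n * (acoef k * ycoef n k)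
                                       = acoef k * (gweight n * ocoef n * ycoef n k)). ring.
    - apply (filterlim_Cmult eventually); [apply filterlim_const|].
      rewrite Phi_expand. apply CSeries_correct, (proj1 (HKPn n)). }
  destruct (tannery eventually f _ _ _ (is_series_geom_scal K (1 / 4) ltac:(lra))
              (filter_forall _ (fun N => HKs N)) Hlim) as [_ [Hex HT]].
  assert (HT' : filterlim (fun N => CSeries (f N)) eventually (locally (L * CSeries acoef))).
  { apply (filterlim_ext (fun N : nat => L * sum_n acoef N));
      [intros N; symmetry; apply CSeries_unique, is_series_acoef_zterm_sum|].
    apply (filterlim_Cmult eventually); [apply filterlim_const|apply CSeries_correct, ex_series_acoef]. }
  change (is_series (fun n => gweight n * ocoef n * Phi n) (L * CSeries acoef)).
  rewrite <- (filterlim_locally_unique _ _ _ HT HT').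
  now apply CSeries_correct.
Qed.

Definition xy_coef (x y : C) n :=
  qpochs (a * z :: w * q :: - w * q :: a * q / b :: x :: y :: nil) q n
  / qpochs (q :: w :: - w :: b * z :: a * z * q / x :: a * z * q / y :: nil) q n
  * pow_n (b * z / (x * y)) n.

Lemma xy_coef_factor (x y : C) n : x <> 0 -> y <> 0 ->
  qpoch (a * z * q / x) q n <> 0 -> qpoch (a * z * q / y) q n <> 0 ->
  xy_coef x y n = xy_weight (a * z) q (/ x) (/ y) n * ocoef n.
Proof.
  intros Hx Hy Hxn Hyn. unfold xy_coef, xy_weight, ocoef.
  rewrite !qpochs_cons, (qpoch_qprod x q n Hx), (qpoch_qprod y q n Hy), (pow_n_Cpow (b * z / (x * y)) n).
  replace ((b * z / (x * y)) ^ n) with ((b * z) ^ n * / (x ^ n * y ^ n))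
    by (unfold Cdiv; rewrite (Cpow_mult_l (b * z)), Cpow_inv, (Cpow_mult_l x y) by (now apply Cmult_neq_0);
        reflexivity).
  assert (Hxn' := Cpow_nz x n Hx). assert (Hyn' := Cpow_nz y n Hy).
  change (a * z * q / x) with (a * z * q * / x) in *. change (a * z * q / y) with (a * z * q * / y) in *.
  simpl. field. repeat split; auto.
Qed.

Lemma xy_coef_factor_near_infty :
  infty2 (fun p => forall n,
    xy_coef (fst p) (snd p) n = xy_weight (a * z) q (/ fst p) (/ snd p) n * ocoef n).
Proof.
  set (d := ((1 - Cmod q) / (2 * (Cmod (a * z) + 1)))%R).
  assert (Hd : (0 < d)%R) by (assert (H := Cmod_ge_0 (a * z)); apply Rdiv_lt_0_compat; lra).
  assert (Hnz : forall u, (Cmod u <= d)%R -> forall n, qpoch (a * z * q * u) q n <> 0).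
  { intros u Hu n E. assert (H := Cmod_qpoch_mul_ge_half (a * z) q u n Hq Hu).
    rewrite E, Cmod_0 in H. lra. }
  refine (filter_imp _ _ _ (infty2_inv_small d Hd)). intros [x y] (Hx & Hy & Hxd & Hyd) n. simpl in *.
  apply xy_coef_factor; auto; [apply (Hnz (/ x) Hxd)|apply (Hnz (/ y) Hyd)].
Qed.

Lemma xy_coef_bound : exists K, (0 <= K)%R /\
  infty2 (fun p => forall n, (Cmod (xy_coef (fst p) (snd p) n) <= K * (1 / 4) ^ n)%R).
Proof.
  destruct (xy_weight_bound (a * z) q (b * z) Hq) as [d [K0 [Hd [HK0 Hxy]]]].
  destruct ocoef_bound as [Ko [HKo HKon]].
  exists (K0 * Ko)%R. split; [now apply Rmult_le_pos|].
  refine (filter_imp _ _ _ (filter_and _ _ (infty2_inv_small d Hd) xy_coef_factor_near_infty)).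
  intros [x y] [(_ & _ & Hxd & Hyd) Hfac] n. simpl in *. rewrite Hfac, Cmod_mult.
  assert (H := Hxy (/ x) (/ y) n Hxd Hyd). specialize (HKon n).
  assert (G := Cmod_ge_0 (xy_weight (a * z) q (/ x) (/ y) n)).
  apply Rle_trans with (Cmod (xy_weight (a * z) q (/ x) (/ y) n) * (Ko * Cmod (b * z) ^ n))%R;
    [now apply Rmult_le_compat_l|].
  replace (Cmod (xy_weight (a * z) q (/ x) (/ y) n) * (Ko * Cmod (b * z) ^ n))%R
    with (Cmod (xy_weight (a * z) q (/ x) (/ y) n) * Cmod (b * z) ^ n * Ko)%R by ring.
  replace (K0 * Ko * (1 / 4) ^ n)%R with (K0 * (1 / 4) ^ n * Ko)%R by ring.
  now apply Rmult_le_compat_r.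
Qed.

Lemma filterlim_xy_coef n :
  filterlim (fun p => xy_coef (fst p) (snd p) n) infty2 (locally (gweight n * ocoef n)).
Proof.
  apply (filterlim_ext_loc (fun p => xy_weight (a * z) q (/ fst p) (/ snd p) n * ocoef n)).
  - refine (filter_imp _ _ _ xy_coef_factor_near_infty). intros p Hp. now rewrite Hp.
  - apply (filterlim_Cmult infty2); [apply filterlim_xy_weight|apply filterlim_const].
Qed.

End Expansion.

Theorem corollary3p1 (r : nat) (a b c z q w : C) (A B : nat -> C) :
  Cmod q < 1 -> Cmod (c * z) < 1 ->
  (* w = (az)^{1/2}, either branch *)
  w * w = a * z ->
  (* genericity: all denominators nonzero *)
  b <> 0 ->
  (forall k : nat, a * z * pow_n q k <> 1) ->
  (forall k : nat, b * z * pow_n q k <> 1) ->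
  (forall (j k : nat), (j < r)%nat -> B j * pow_n q k <> 1) ->
  let LHS := qpinf (a * z * q) q / qpinf (b * z) q
             * phi (fam A (S r)) (fam B r) q (c * z) in
  let term (p : C * C) (n : nat) : C :=
    let x := fst p in let y := snd p in
    qpochs (a * z :: w * q :: - w * q :: a * q / b :: x :: y :: nil) q n
    / qpochs (q :: w :: - w :: b * z :: a * z * q / x :: a * z * q / y :: nil) q n
    * pow_n (b * z / (x * y)) n
    * phi (a * z * pow_n q n :: a * z * pow_n q (2 * n + 1) :: fam A (S r))
          (b * z * pow_n q n :: a * z * pow_n q (2 * n) :: fam B r)
          q (c * z * pow_n q n) in
  infty2 (fun p => ex_series (term p)) /\
  filterlim (fun p => CSeries (term p)) infty2 (locally LHS).
Proof.
  intros Hq Hcz Hw Hb Haz Hbz HB LHS term.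
  assert (Haz' : forall k, a * z * q ^ k <> 1) by (intros k; rewrite <- pow_n_Cpow; apply Haz).
  assert (Hbz' : forall k, b * z * q ^ k <> 1) by (intros k; rewrite <- pow_n_Cpow; apply Hbz).
  assert (HB' : forall j k, (j < r)%nat -> B j * q ^ k <> 1)
    by (intros j k Hj; rewrite <- pow_n_Cpow; now apply HB).
  destruct (xy_coef_bound a b z q w Hq Hw Haz' Hbz') as [Kx [HKx Hx]].
  destruct (Phi_bound a b z q Hq Haz' Hbz' r c A B Hcz HB') as [KP [HKP HP]].
  assert (Hterm : forall p n, term p n = xy_coef a b z q w (fst p) (snd p) n * Phi a b z q r c A B n)
    by reflexivity.
  assert (Hbound : infty2 (fun p => forall n, (Cmod (term p n) <= Kx * KP * (1 / 4) ^ n)%R)).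
  { refine (filter_imp _ _ _ Hx). intros p Hp n. rewrite Hterm.
    replace (Kx * KP * (1 / 4) ^ n)%R with (Kx * (1 / 4) ^ n * KP)%R by ring.
    apply Cmod_mult_le; [apply Hp|apply HP]. }
  assert (Hlim : forall n, filterlim (fun p => term p n) infty2
                   (locally (gweight a z q n * ocoef a b z q w n * Phi a b z q r c A B n))).
  { intros n. apply (filterlim_Cmult infty2); [now apply filterlim_xy_coef|apply filterlim_const]. }
  destruct (tannery infty2 term _ _ _ (is_series_geom_scal (Kx * KP) (1 / 4) ltac:(lra)) Hbound Hlim)
    as [Hex [_ Hcvg]].
  split; [exact Hex|].
  unfold LHS.
  rewrite <- (CSeries_unique _ _ (is_series_xy_limit a b z q w Hq Hb Hw Haz' Hbz' r c A B Hcz HB')).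
  exact Hcvg.
Qed.
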